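(* Let $\boldsymbol X$ be an $n\times d$ data matrix and let $\widehat{\boldsymbol\Sigma}$ be a covariance estimator, i.e. a map assigning to every $n\times d$ data matrix a symmetric positive semidefinite $d\times d$ matrix, satisfying: whenever all rows of a data matrix lie in a lower-dimensional affine subspace of $\mathbb R^d$, the estimate $\widehat{\boldsymbol\Sigma}$ of that data matrix is singular. Then the cellwise implosion breakdown value satisfies $$\varepsilon^-_n(\widehat{\boldsymbol\Sigma},\boldsymbol X)\leqslant \left\lceil\frac{n-1}{d}\right\rceil\Big/n .$$
   Context: For an integer $m\ge0$, $\boldsymbol X^m$ denotes any matrix obtained from $\boldsymbol X$ by replacing at most $m$ cells in each column by arbitrary real values. The cellwise implosion breakdown value is $\varepsilon^-_n(\widehat{\boldsymbol\Sigma},\boldsymbol X)=\min\{\tfrac{m}{n}:\ \inf_{\boldsymbol X^m}\lambda_d(\widehat{\boldsymbol\Sigma}(\boldsymbol X^m))=0\}$, where $\lambda_d$ denotes the smallest eigenvalue and the infimum is over all such corrupted matrices $\boldsymbol X^m$. *)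

From HB Require Import structures.
From mathcomp Require Import all_boot all_order all_algebra.
From mathcomp Require Import classical_sets reals.
Set Implicit Arguments. Unset Strict Implicit. Unset Printing Implicit Defensive.
Import Order.TTheory GRing.Theory Num.Theory.
Local Open Scope ring_scope.
Local Open Scope classical_set_scope.

Section Defs.
Variable R : realType.

Definition psd_sym (d : nat) (A : 'M[R]_d) : Prop :=
  A^T = A /\ forall v : 'cV[R]_d, 0 <= (v^T *m A *m v) 0 0.

Definition lambda_min (d : nat) (A : 'M[R]_d) : R :=
  inf [set a : R | eigenvalue A a].

Definition rows_in_lower_dim_affine (n d : nat) (X : 'M[R]_(n, d)) : Prop :=
  exists (a : 'rV[R]_d) (V : 'M[R]_d),
    (\rank V < d)%N /\ forall i : 'I_n, (row i X - a <= V)%MS.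

Definition cellwise_corrupted (n d m : nat) (X Y : 'M[R]_(n, d)) : Prop :=
  forall j : 'I_d, (#|[set i : 'I_n | Y i j != X i j]| <= m)%N.

Definition covariance_estimator (n d : nat) (Sigma : 'M[R]_(n, d) -> 'M[R]_d) : Prop :=
  forall Y, psd_sym (Sigma Y).

Definition inf_lambda_corrupt (n d m : nat) (Sigma : 'M[R]_(n, d) -> 'M[R]_d)
    (X : 'M[R]_(n, d)) : R :=
  inf [set lambda_min (Sigma Y) | Y in [set Y | cellwise_corrupted m X Y]].

Definition implosion_breakdown (n d : nat) (Sigma : 'M[R]_(n, d) -> 'M[R]_d)
    (X : 'M[R]_(n, d)) : R :=
  inf [set (m%:R / n%:R) | m in [set m : nat | inf_lambda_corrupt m Sigma X = 0]].

End Defs.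

(* Keep the first row of X and, in every other row, change one cell so that
   the coordinates of that row sum to the same value as those of the first
   row.  All rows of the corrupted matrix then lie in an affine hyperplane,
   so the estimate is singular and, being positive semidefinite, has
   smallest eigenvalue 0.  Assigning rows 2, ..., n to the d columns in
   consecutive blocks of m = ceil((n-1)/d) rows changes at most m cells per
   column. *)
From HB Require Import structures.
From mathcomp Require Import all_boot all_order all_algebra.
From mathcomp Require Import classical_sets reals boolp.
From mathcomp Require Import zify.
Set Implicit Arguments. Unset Strict Implicit.
Import Order.TTheory GRing.Theory Num.Theory.
Local Open Scope ring_scope.

Section RowBlocks.
Variables (N m D : nat).
Hypothesis hN : (N <= m * D)%N.

Lemma row_block_lt (i : 'I_N.+1) : (0 < i)%N -> (i.-1 %/ m < D)%N.
Proof.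
move=> i_gt0; have := ltn_ord i.
case: (posnP m) => [m0 | m_gt0]; first by move: hN; rewrite m0; lia.
by rewrite ltn_divLR //; lia.
Qed.

Lemma card_row_block_le (j : nat) :
  (#|[set i : 'I_N.+1 | (0 < i)%N && (i.-1 %/ m == j)%N]| <= m)%N.
Proof.
case: (posnP m) => [m0 | m_gt0].
  rewrite m0 leqn0 cards_eq0; apply/eqP/setP => i; rewrite !inE.
  by have := ltn_ord i; move: hN; rewrite m0; lia.
rewrite -[X in (_ <= X)%N]card_ord.
apply: (@leq_card_in _ _ (fun i : 'I_N.+1 => Ordinal (ltn_pmod i.-1 m_gt0))).
move=> i k; rewrite !inE => /andP[i_gt0 /eqP ij] /andP[k_gt0 /eqP kj].
move/(congr1 val) => /= eq_mod; apply: val_inj => /=.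
have := divn_eq i.-1 m; have := divn_eq k.-1 m.
by rewrite ij kj eq_mod; lia.
Qed.

End RowBlocks.

Lemma rows_in_lower_dim_affine_hyperplane (R : realType) (n d : nat)
    (Y : 'M[R]_(n, d)) (a : 'rV_d) (w : 'cV_d) :
  w != 0 -> (forall i, row i Y *m w = a *m w) -> rows_in_lower_dim_affine Y.
Proof.
move=> w_neq0 rowsYw; exists a, (kermx w); split.
  rewrite mxrank_ker; have := rank_leq_row w.
  by rewrite -mxrank_eq0 in w_neq0; lia.
by move=> i; rewrite sub_kermx mulmxBl rowsYw subrr.
Qed.

Section LevelRowSums.
Variables (R : realType) (n d m : nat) (X : 'M[R]_(n.+1, d.+1)).

Definition row_block (i : 'I_n.+1) : 'I_d.+1 := inord (i.-1 %/ m).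

Definition level_row_sums : 'M[R]_(n.+1, d.+1) :=
  \matrix_(i, k) (X i k +
    if (0 < i)%N && (k == row_block i) then \sum_l X 0 l - \sum_l X i l else 0).

Lemma level_row_sumsE (i : 'I_n.+1) :
  row i level_row_sums *m (const_mx 1 : 'cV_d.+1) = row 0 X *m const_mx 1.
Proof.
apply/rowP => a; rewrite !mxE.
under eq_bigr do rewrite !mxE mulr1.
under [RHS]eq_bigr do rewrite !mxE mulr1.
rewrite big_split /=; case: (posnP i) => [i0 | i_gt0] /=.
  by rewrite [X in _ + X]big1 // addr0 (_ : i = 0) //; apply: val_inj.
by rewrite -(big_mkcond (pred1 (row_block i))) big_pred1_eq addrC subrK.
Qed.

Lemma level_row_sums_corrupted :
  (n <= m * d.+1)%N -> cellwise_corrupted m X level_row_sums.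
Proof.
move=> hn j; apply: leq_trans _ (card_row_block_le hn j).
apply/subset_leq_card/fintype.subsetP => i; rewrite !inE /= mxE.
case: ifP => [/andP[i_gt0 /eqP ->] _ | _]; last by rewrite addr0 eqxx.
by rewrite i_gt0 /row_block inordK ?eqxx //; apply: row_block_lt hn _ i_gt0.
Qed.

End LevelRowSums.

Lemma exists_corrupted_lower_dim_affine (R : realType) (n d m : nat)
    (X : 'M[R]_(n.+1, d.+1)) :
  (n <= m * d.+1)%N ->
  exists2 Y, cellwise_corrupted m X Y & rows_in_lower_dim_affine Y.
Proof.
move=> hn; exists (level_row_sums m X); first exact: level_row_sums_corrupted.
apply: (rows_in_lower_dim_affine_hyperplane (a := row 0 X) _ (level_row_sumsE _ _)).
by apply/eqP => /matrixP /(_ 0 0); rewrite !mxE => /eqP; rewrite oner_eq0.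
Qed.

Local Open Scope classical_set_scope.

Lemma inf_ge0 (R : realType) (S : set R) : (forall x, S x -> 0 <= x) -> 0 <= inf S.
Proof.
move=> S_ge0; have [[x Sx] | S0] := pselect (S !=set0).
  by apply: lb_le_inf => //; exists x.
by rewrite (_ : S = set0) ?inf0 //; apply/seteqP; split => // x Sx; apply: S0; exists x.
Qed.

Lemma inf_eq0 (R : realType) (S : set R) :
  (forall x, S x -> 0 <= x) -> S 0 -> inf S = 0.
Proof.
move=> S_ge0 S0; apply/le_anti; rewrite inf_ge0 // andbT.
by apply: ge_inf => //; exists 0.
Qed.

Lemma psd_sym_eigenvalue_ge0 (R : realType) (d : nat) (A : 'M[R]_d) (a : R) :
  psd_sym A -> eigenvalue A a -> 0 <= a.
Proof.
move=> [_ A_psd] /eigenvalueP [v vA v_neq0].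
have sq_ge0 k : 0 <= v 0 k * v^T k 0 by rewrite mxE -expr2 sqr_ge0.
have vvT_gt0 : 0 < (v *m v^T) 0 0.
  rewrite mxE lt_def sumr_ge0 ?andbT //; apply: contra v_neq0 => /eqP sum_sq0.
  have sq0 := psumr_eq0P (fun l _ => sq_ge0 l) sum_sq0.
  apply/eqP/rowP => k; have /eqP := sq0 k isT.
  by rewrite mxE mulf_eq0 orbb !mxE => /eqP.
by have := A_psd v^T; rewrite trmxK vA -scalemxAl mxE pmulr_lge0.
Qed.

Lemma lambda_min_ge0 (R : realType) (d : nat) (A : 'M[R]_d) :
  psd_sym A -> 0 <= lambda_min A.
Proof. by move=> A_psd; apply: inf_ge0 => a; apply: psd_sym_eigenvalue_ge0. Qed.

Lemma lambda_min_eq0 (R : realType) (d : nat) (A : 'M[R]_d) :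
  psd_sym A -> \det A = 0 -> lambda_min A = 0.
Proof.
move=> A_psd /eqP /det0P [v v_neq0 vA0].
apply: inf_eq0 => [a | ]; first exact: psd_sym_eigenvalue_ge0.
by apply/eigenvalueP; exists v; rewrite ?scale0r.
Qed.

Lemma inf_lambda_corrupt_eq0 (R : realType) (n d m : nat)
    (Sigma : 'M[R]_(n, d) -> 'M[R]_d) (X Y : 'M[R]_(n, d)) :
  covariance_estimator Sigma -> cellwise_corrupted m X Y -> \det (Sigma Y) = 0 ->
  inf_lambda_corrupt m Sigma X = 0.
Proof.
move=> hSigma XY det0; apply: inf_eq0 => [_ [Z _ <-] | ].
  exact: lambda_min_ge0.
by exists Y => //; apply: lambda_min_eq0.
Qed.

Lemma implosion_breakdown_le (R : realType) (n d m : nat)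
    (Sigma : 'M[R]_(n, d) -> 'M[R]_d) (X : 'M[R]_(n, d)) :
  inf_lambda_corrupt m Sigma X = 0 -> implosion_breakdown Sigma X <= m%:R / n%:R.
Proof.
move=> inf0; apply: ge_inf; last by exists m.
by exists 0 => _ [k _ <-]; rewrite divr_ge0.
Qed.

Lemma ceil_ratio_ge0 (R : archiRealFieldType) (a b : nat) :
  0 <= Num.ceil (a%:R / b%:R : R).
Proof. by rewrite ceil_ge0 (lt_le_trans (ltrN10 _)) ?divr_ge0. Qed.

Lemma le_ceil_ratio_mul (R : archiRealFieldType) (a b : nat) : (0 < b)%N ->
  (a <= `|Num.ceil (a%:R / b%:R : R)|%N * b)%N.
Proof.
move=> b_gt0; rewrite -(ler_nat R) natrM natr_absz ger0_norm ?ceil_ratio_ge0 //.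
by rewrite -ler_pdivrMr ?ltr0n // ceil_ge.
Qed.

Theorem proposition2 (R : realType) (n d : nat) (hn : (0 < n)%N) (hd : (0 < d)%N)
    (Sigma : 'M[R]_(n, d) -> 'M[R]_d) (X : 'M[R]_(n, d))
    (hSigma : covariance_estimator Sigma)
    (hsing : forall Y : 'M[R]_(n, d), rows_in_lower_dim_affine Y -> \det (Sigma Y) = 0) :
  implosion_breakdown Sigma X
    <= (Num.ceil ((n%:R - 1) / d%:R : R))%:~R / n%:R.
Proof.
case: n hn Sigma X hSigma hsing => // n _; case: d hd => // d _ Sigma X hSigma hsing.
have -> : n.+1%:R - 1 = n%:R :> R by rewrite -natr1 addrK.
set m := `|Num.ceil (n%:R / d.+1%:R : R)|%N.
have -> : (Num.ceil (n%:R / d.+1%:R : R))%:~R = m%:R :> R.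
  by rewrite natr_absz ger0_norm ?ceil_ratio_ge0.
have [Y XY Y_affine] :=
  exists_corrupted_lower_dim_affine X (le_ceil_ratio_mul R n (ltn0Sn d)).
apply: implosion_breakdown_le.
exact: inf_lambda_corrupt_eq0 hSigma XY (hsing Y Y_affine).
Qed.
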